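(* Let $\mathcal{D}$ be a $\{K_3,K_4\}$-decomposition of $K_{18}$ with $\alpha=13$, let $W$ be the set of vertices $x$ with $\alpha_x\ge 2$, and for $i\in\{0,1,2,3\}$ let $t_i$ be the number of copies of $K_3$ in $\mathcal{D}$ having exactly $i$ vertices in $W$. Then $(t_0,t_1,t_2,t_3)\neq(0,0,11,2)$.
   Context: A $\{K_3,K_4\}$-decomposition of $K_v$ is a collection of subgraphs, each isomorphic to $K_3$ or $K_4$, such that every edge of $K_v$ lies in exactly one of them. $\alpha$ is the number of copies of $K_3$ in the decomposition, and for a vertex $x$, $\alpha_x$ is the number of copies of $K_3$ in the decomposition containing $x$. *)

From mathcomp Require Import all_boot.
Set Implicit Arguments. Unset Strict Implicit. Unset Printing Implicit Defensive.

(* A copy of K_3 / K_4 in K_v is determined by its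
   vertex set, a 3- or 4-subset; an edge {x,y} lies in the copy iff both
   endpoints are in the vertex set. *)
Definition is_K34_decomp (v : nat) (D : {set {set 'I_v}}) : Prop :=
  (forall B, B \in D -> #|B| = 3 \/ #|B| = 4) /\
  (forall x y : 'I_v, x != y ->
     #|[set B in D | (x \in B) && (y \in B)]| = 1).

Definition triangles (v : nat) (D : {set {set 'I_v}}) : {set {set 'I_v}} :=
  [set B in D | #|B| == 3].

Definition alpha (v : nat) (D : {set {set 'I_v}}) : nat := #|triangles D|.

Definition alpha_x (v : nat) (D : {set {set 'I_v}}) (x : 'I_v) : nat :=
  #|[set B in triangles D | x \in B]|.

Definition Wset (v : nat) (D : {set {set 'I_v}}) : {set 'I_v} :=
  [set x | 2 <= alpha_x D x].

Definition t_count (v : nat) (D : {set {set 'I_v}}) (i : nat) : nat :=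
  #|[set B in triangles D | #|B :&: Wset D| == i]|.

From mathcomp Require Import all_boot zify.
Set Implicit Arguments. Unset Strict Implicit. Unset Printing Implicit Defensive.

(* Counting the edges at x gives 2 alpha_x + 3 (quads at x) = 17, and the
   profile (0,0,11,2) then forces |W| = 7 and alpha_x = 4 on W; counting the
   vertices of W seen from a vertex of W shows that every quad meets W at most
   twice, four quads meet it twice and exactly two, K and K', avoid it. K and
   K' are disjoint and matched by the four quads meeting W twice, and the three
   vertices outside W, K and K' lie on one quad Q, which meets W in a single
   vertex x0. The two other quads at x0 meet K once each; let k3, k4 be the
   other two vertices of K and p3, p4 their partners in K'. The triangles at
   k3, k4, p3, p4 pass through x0, so a vertex A <> x0 of W on one of these
   two quads has as quads that quad and the blocks from A to k3 and to k4.
   Counting W at A again, p3 cannot lie with k3, so A lies on the block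
   through k4 and p3, and likewise on the block through k3 and p4. Two such
   vertices A make these blocks equal, hence equal to K, which avoids W. *)

Section Counting.
Variable T : finType.
Implicit Types (A S : {set T}) (P : {set {set T}}).

Lemma card_sep_sum A (p : pred T) : #|[set x in A | p x]| = \sum_(x in A) p x.
Proof.
rewrite -sum1_card [RHS]big_mkcond [LHS]big_mkcond /=.
by apply: eq_bigr => x _; rewrite inE; case: (x \in A); case: (p x).
Qed.

Lemma double_count P S (f : {set T} -> nat) :
  \sum_(x in S) \sum_(B in P | x \in B) f B = \sum_(B in P) #|B :&: S| * f B.
Proof.
rewrite (exchange_big_dep (mem P)) /=; last by move=> x B _ /andP[].
apply: eq_bigr => B PB; rewrite -sum_nat_const; apply: eq_bigl => x.
by rewrite !inE PB andbC.
Qed.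

Lemma double_count1 P S :
  \sum_(x in S) #|[set B in P | x \in B]| = \sum_(B in P) #|B :&: S|.
Proof.
rewrite -[RHS](eq_bigr _ (fun B _ => muln1 _)) -double_count.
by apply: eq_bigr => x _; rewrite -sum1_card; apply: eq_bigl => B; rewrite inE.
Qed.

Lemma sum_nat_const_in A (F : T -> nat) k :
  {in A, forall x, F x = k} -> \sum_(x in A) F x = #|A| * k.
Proof. by move=> Fk; rewrite -sum_nat_const; apply: eq_bigr. Qed.

Lemma leq_sum_eq A (F G : T -> nat) :
  {in A, forall x, F x <= G x} -> \sum_(x in A) G x <= \sum_(x in A) F x ->
  {in A, forall x, F x = G x}.
Proof.
move=> leFG sumGF.
have [_ eqFG] : \sum_(x in A) F x <= \sum_(x in A) G x
               ?= iff [forall (x | x \in A), F x == G x].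
  by apply: leqif_sum => x /leFG /leqif_eq.
have : [forall (x | x \in A), F x == G x] by rewrite -eqFG eqn_leq sumGF leq_sum.
by move=> /forall_inP FG x /FG /eqP.
Qed.

Lemma cards2_other A y : #|A| = 2 -> y \in A -> exists2 u, u \in A & u != y.
Proof.
move=> /eqP/cards2P [a [b [ab ->]]]; rewrite in_set2 => /orP[]/eqP->.
  by exists b; rewrite ?in_set2 ?eqxx ?orbT // eq_sym.
by exists a; rewrite ?in_set2 ?eqxx.
Qed.

End Counting.

Section Decomposition.
Variables (v : nat) (D : {set {set 'I_v}}).
Hypothesis D_size : forall B, B \in D -> #|B| = 3 \/ #|B| = 4.
Hypothesis D_edge : forall x y : 'I_v, x != y ->
  #|[set B in D | (x \in B) && (y \in B)]| = 1.
Implicit Types (B C S : {set 'I_v}) (x y : 'I_v).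

Lemma block_uniq B C x y : B \in D -> C \in D -> x != y ->
  x \in B -> y \in B -> x \in C -> y \in C -> B = C.
Proof.
move=> DB DC xy xB yB xC yC; have /eqP/cards1P [E DxyE] := D_edge xy.
have : B \in [set E] by rewrite -DxyE inE DB xB yB.
have : C \in [set E] by rewrite -DxyE inE DC xC yC.
by rewrite !inE => /eqP -> /eqP ->.
Qed.

Lemma card_blocksI_le1 B C : B \in D -> C \in D -> B != C -> #|B :&: C| <= 1.
Proof.
move=> DB DC; apply: contraNT; rewrite -ltnNge => /card_gt1P [x [y [+ + xy]]].
rewrite !inE => /andP[xB xC] /andP[yB yC].
by rewrite (block_uniq DB DC xy xB yB xC yC) eqxx.
Qed.

Definition block x y := odflt set0 [pick B in D | (x \in B) && (y \in B)].

Lemma blockP x y : x != y -> [/\ block x y \in D, x \in block x y & y \in block x y].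
Proof.
rewrite /block => xy; case: pickP => [B /andP[DB /andP[]] //|noB].
move: (D_edge xy); rewrite (_ : [set B in D | _] = set0) ?cards0 //.
by apply/setP => B; rewrite !inE; have := noB B; rewrite /= => ->.
Qed.

Definition quads := [set B in D | #|B| == 4].
Definition tri_at x := [set B in triangles D | x \in B].
Definition quad_at x := [set B in quads | x \in B].

Lemma trianglesP B : B \in triangles D -> B \in D /\ #|B| = 3.
Proof. by rewrite !inE => /andP[-> /eqP]. Qed.

Lemma quadsP B : B \in quads -> B \in D /\ #|B| = 4.
Proof. by rewrite !inE => /andP[-> /eqP]. Qed.

Lemma block_tri_or_quad B : B \in D -> B \in triangles D \/ B \in quads.
Proof. by move=> DB; rewrite !inE DB; case: (D_size DB) => ->; [left|right]. Qed.

(* Each y in S lies in exactly one block through x. *)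
Lemma sum_cardI_blocks_at x S : x \notin S ->
  \sum_(B in tri_at x) #|B :&: S| + \sum_(B in quad_at x) #|B :&: S| = #|S|.
Proof.
move=> xNS; pose Dx := [set B in D | x \in B].
have -> : #|S| = \sum_(B in Dx) #|B :&: S|.
  rewrite -double_count1 -sum1_card; apply: eq_bigr => y yS.
  rewrite -(D_edge (_ : x != y)); last by apply: contraNneq xNS => ->.
  by apply: eq_card => B; rewrite !inE andbA.
rewrite [RHS](bigID (fun B => #|B| == 3)) /=; congr (_ + _); apply: eq_bigl => B.
  by rewrite !inE; case: (B \in D); case: (#|B| == 3); case: (x \in B).
rewrite !inE; case DB: (B \in D) => //=.
by case: (D_size DB) => ->; case: (x \in B).
Qed.

Lemma degree_eq x : 2 * alpha_x D x + 3 * #|quad_at x| = v.-1.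
Proof.
have := @sum_cardI_blocks_at x [set~ x]; rewrite !inE eqxx cardsC1 card_ord.
move=> /(_ isT) <-; rewrite mulnC [3 * _]mulnC.
have cardD1 k B : #|B| = k.+1 -> x \in B -> #|B :&: [set~ x]| = k.
  by move=> Bk xB; move: (cardsD1 x B); rewrite Bk xB setDE => -[].
congr (_ + _); apply/esym/sum_nat_const_in => B; rewrite inE.
  by case/andP => /trianglesP[_ B3] /(cardD1 _ _ B3).
by case/andP => /quadsP[_ B4] /(cardD1 _ _ B4).
Qed.

End Decomposition.

Section Profile.
Variable D : {set {set 'I_18}}.
Hypothesis D_size : forall B, B \in D -> #|B| = 3 \/ #|B| = 4.
Hypothesis D_edge : forall x y : 'I_18, x != y ->
  #|[set B in D | (x \in B) && (y \in B)]| = 1.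
Hypothesis alphaD : alpha D = 13.
Hypotheses (t0 : t_count D 0 = 0) (t1 : t_count D 1 = 0).
Hypotheses (t2 : t_count D 2 = 11) (t3 : t_count D 3 = 2).
Implicit Types (B C P R S : {set 'I_18}) (x y : 'I_18).

Local Notation W := (Wset D).
Local Notation tri := (triangles D).
Local Notation quad := (quads D).
Local Notation tri_at := (tri_at D).
Local Notation quad_at := (quad_at D).
Local Notation block := (block D).
Local Notation wc B := #|B :&: W|.

Local Notation block_uniq := (block_uniq D_edge).
Local Notation card_blocksI_le1 := (card_blocksI_le1 D_edge).
Local Notation blockP := (blockP D_edge).
Local Notation sum_cardI_blocks_at := (sum_cardI_blocks_at D_size D_edge).

Lemma degree18 x : 2 * alpha_x D x + 3 * #|quad_at x| = 17.
Proof. exact: degree_eq D_size D_edge x. Qed.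

Lemma alpha_notW x : x \notin W -> alpha_x D x = 1.
Proof. by rewrite inE -ltnNge => ?; have := degree18 x; lia. Qed.

Lemma wc_tri B : B \in tri -> wc B = 2 \/ wc B = 3.
Proof.
move=> triB; have [_ B3] := trianglesP triB.
have wc_neq i : t_count D i = 0 -> wc B != i.
  move/eqP; rewrite cards_eq0 => /eqP/setP/(_ B); rewrite !inE.
  by case/trianglesP: triB => -> ->; rewrite /= => /negbT.
have := wc_neq 0 t0; have := wc_neq 1 t1.
have : wc B <= #|B| by rewrite subset_leq_card ?subsetIl.
lia.
Qed.

Lemma card_notW : #|~: W| = 11.
Proof.
have := double_count1 tri (~: W).
rewrite (eq_bigr (fun _ => 1)) => [|x]; last by rewrite inE => /alpha_notW.
rewrite sum1_card => ->; apply: etrans t2.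
rewrite /t_count card_sep_sum; apply: eq_bigr => B triB.
have := cardsID W B; rewrite (trianglesP triB).2 setDE.
by case: (wc_tri triB) => ->; lia.
Qed.

Lemma card_W : #|W| = 7.
Proof. by have := cardsC W; rewrite card_notW card_ord; lia. Qed.

Lemma alpha_W x : x \in W -> alpha_x D x = 4.
Proof.
have alpha_ge4 y : y \in W -> 4 <= alpha_x D y.
  by rewrite inE => ?; have := degree18 y; lia.
suff alphaE : {in W, forall y, 4 = alpha_x D y} by move=> /alphaE.
apply: leq_sum_eq => //; rewrite sum_nat_const card_W.
have := double_count1 tri W; rewrite /alpha_x => ->.
rewrite (eq_bigr (fun B => 2 + (wc B == 3))); last first.
  by move=> B /wc_tri[] ->.
rewrite big_split /= sum_nat_const -card_sep_sum.
by rewrite -/(alpha D) -/(t_count D 3) t3 alphaD.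
Qed.

Lemma card_quad_at_W x : x \in W -> #|quad_at x| = 3.
Proof. by move=> /alpha_W; have := degree18 x; lia. Qed.

Lemma card_quad_at_notW x : x \notin W -> #|quad_at x| = 5.
Proof. by move=> /alpha_notW; have := degree18 x; lia. Qed.


Definition Wtri := [set B in tri | wc B == 3].
Definition Wtri_deg x := #|[set B in Wtri | x \in B]|.
Definition excess x := \sum_(B in quad_at x) (wc B).-1.

Lemma Wtri_subW B : B \in Wtri -> B \subset W.
Proof.
rewrite inE => /andP[/trianglesP[_ B3] /eqP BW3].
by apply/setIidPl/eqP; rewrite eqEcard subsetIl B3 BW3 /=.
Qed.

Lemma cardI_W_minus x B : x \in B -> x \in W -> #|B :&: (W :\ x)| = (wc B).-1.
Proof.
move=> xB xW; rewrite setDE setIA -setDE.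
by have := cardsD1 x (B :&: W); rewrite inE xB xW => ->.
Qed.

(* Counting the other six vertices of W seen from x: the four triangles at x
   see 4 + Wtri_deg x of them, the quads see excess x. *)
Lemma excess_W x : x \in W -> excess x + Wtri_deg x = 2.
Proof.
move=> xW; have := @sum_cardI_blocks_at x (W :\ x); rewrite !inE eqxx => /(_ isT).
have -> : #|W :\ x| = 6 by have := cardsD1 x W; rewrite xW card_W add1n => -[].
have -> : \sum_(B in quad_at x) #|B :&: (W :\ x)| = excess x.
  by apply: eq_bigr => B; rewrite inE => /andP[_ xB]; rewrite cardI_W_minus.
have -> : \sum_(B in tri_at x) #|B :&: (W :\ x)| = 4 + Wtri_deg x.
  have -> : Wtri_deg x = \sum_(B in tri_at x) (wc B == 3).
    by rewrite -card_sep_sum; apply: eq_card => B; rewrite !inE andbAC.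
  rewrite -[X in _ = X + _](alpha_W xW) /alpha_x -/(tri_at x) -sum1_card.
  rewrite -big_split /=; apply: eq_bigr => B; rewrite inE => /andP[triB xB].
  by rewrite cardI_W_minus //; case: (wc_tri triB) => ->.
lia.
Qed.

Lemma card_Wtri : #|Wtri| = 2.
Proof. exact: t3. Qed.

Lemma sum_Wtri_deg : \sum_(x in W) Wtri_deg x = 6.
Proof.
rewrite /Wtri_deg double_count1 (@sum_nat_const_in _ _ _ 3) ?card_Wtri // => B.
by rewrite inE => /andP[_ /eqP].
Qed.

Lemma sum_quad_wc : \sum_(B in quad) wc B * (wc B).-1 = 8.
Proof.
have sum14 : \sum_(x in W) excess x + \sum_(x in W) Wtri_deg x = 14.
  by rewrite -big_split (@sum_nat_const_in _ _ _ 2) ?card_W // => x /excess_W.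
suff -> : \sum_(B in quad) wc B * (wc B).-1 = \sum_(x in W) excess x.
  by move: sum14; rewrite sum_Wtri_deg; lia.
rewrite -(double_count _ _ (fun B => (wc B).-1)); apply: eq_bigr => x _.
by apply: eq_bigl => B; rewrite !inE.
Qed.

Lemma excess_ge x B : B \in quad_at x -> (wc B).-1 <= excess x.
Proof. by move=> Bx; rewrite /excess (bigD1 B) //= leq_addr. Qed.

Lemma Wtri_span S : (forall T, T \in Wtri -> T \subset S) -> 5 <= #|S|.
Proof.
move=> Wtri_sub; have /cards2P [T [T' [TT' Wtri2]]] : #|Wtri| == 2 by rewrite card_Wtri.
have WtriT : T \in Wtri by rewrite Wtri2 !inE eqxx.
have WtriT' : T' \in Wtri by rewrite Wtri2 !inE eqxx orbT.
have [DT T3] := trianglesP (setIdP WtriT).1.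
have [DT' T'3] := trianglesP (setIdP WtriT').1.
have := card_blocksI_le1 DT DT' TT'; have := cardsUI T T'.
have : #|T :|: T'| <= #|S| by rewrite subset_leq_card // subUset !Wtri_sub.
lia.
Qed.

(* A quad with three vertices in W would force excess 2 at each of them, so
   both W-triangles would avoid it and fit into the remaining four vertices. *)
Lemma wc_quad_le2 B : B \in quad -> wc B <= 2.
Proof.
move=> quadB; rewrite leqNgt; apply/negP => wcB_gt2.
have BW_tight y : y \in B :&: W -> wc B = 3 /\ Wtri_deg y = 0.
  rewrite inE => /andP[yB yW]; have := excess_W yW.
  have := @excess_ge y B; rewrite inE quadB yB => /(_ isT); lia.
have [y yBW] : exists y, y \in B :&: W.
  by apply/set0Pn; rewrite -card_gt0; exact: ltn_trans (isT : 0 < 2) wcB_gt2.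
have [wcB3 _] := BW_tight y yBW.
suff : 5 <= #|W :\: B| by rewrite cardsD setIC wcB3 card_W.
apply: Wtri_span => T WtriT; apply/subsetP => z zT.
rewrite inE (subsetP (Wtri_subW WtriT)) // andbT; apply/negP => zB.
have zBW : z \in B :&: W by rewrite inE zB (subsetP (Wtri_subW WtriT)).
have : 0 < Wtri_deg z by apply/card_gt0P; exists T; rewrite inE WtriT.
by have [_ ->] := BW_tight z zBW.
Qed.

Definition quadW k := [set B in quad | wc B == k].
Definition quadW_deg k y := #|[set B in quadW k | y \in B]|.

Lemma quadW_degE k y : quadW_deg k y = \sum_(B in quad_at y) (wc B == k).
Proof. by rewrite -card_sep_sum; apply: eq_card => B; rewrite !inE andbAC. Qed.

Lemma cardI_notW B : #|B :&: ~: W| = #|B| - wc B.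
Proof. by rewrite -setDE -(cardsID W B) addKn. Qed.

Lemma tri_at_notW y : y \notin W ->
  exists T, [/\ tri_at y = [set T], wc T = 2 & T :&: ~: W = [set y]].
Proof.
move=> yNW; have /cards1P [T triyT] : #|tri_at y| == 1.
  by rewrite -/(alpha_x D y) alpha_notW.
have : T \in tri_at y by rewrite triyT inE.
rewrite inE => /andP[triT yT]; have [_ T3] := trianglesP triT.
have yTNW : y \in T :&: ~: W by rewrite in_setI in_setC yT.
have : 0 < #|T :&: ~: W| by apply/card_gt0P; exists y.
rewrite cardI_notW T3 => wcT_lt3.
have wcT : wc T = 2 by case: (wc_tri triT) wcT_lt3 => ->.
exists T; split=> //; apply/esym/eqP; rewrite eqEcard sub1set yTNW cards1.
by rewrite cardI_notW T3 wcT.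
Qed.

Lemma sum_wc_quad_at_notW y : y \notin W -> \sum_(B in quad_at y) wc B = 5.
Proof.
move=> yNW; have := sum_cardI_blocks_at yNW; rewrite card_W.
by have [T [-> wcT _]] := tri_at_notW yNW; rewrite big_set1 wcT => -[].
Qed.

(* The five quads at y carry five vertices of W, at most two each, so as many
   of them carry none as carry two. *)
Lemma quadW_deg0_2 y : y \notin W -> quadW_deg 0 y = quadW_deg 2 y.
Proof.
move=> yNW; have : \sum_(B in quad_at y) (wc B + (wc B == 0))
                   = \sum_(B in quad_at y) (1 + (wc B == 2)).
  apply: eq_bigr => B; rewrite inE => /andP[/wc_quad_le2 + _].
  by case: (wc B) => [|[|[|]]].
rewrite !big_split /= sum_wc_quad_at_notW // sum1_card card_quad_at_notW //.
by rewrite -!quadW_degE => -[].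
Qed.

Lemma card_quadW2 : #|quadW 2| = 4.
Proof.
suff : #|quadW 2| + #|quadW 2| = 8 by lia.
rewrite /quadW card_sep_sum -big_split -[RHS]sum_quad_wc /=.
by apply: eq_bigr => B /wc_quad_le2; case: (wc B) => [|[|[|]]].
Qed.

Lemma sum_quadW_deg k : k <= 4 ->
  \sum_(y in ~: W) quadW_deg k y = #|quadW k| * (4 - k).
Proof.
move=> k_le4; rewrite /quadW_deg double_count1; apply: sum_nat_const_in => B.
by rewrite inE => /andP[/quadsP[_ B4] /eqP wcB]; rewrite cardI_notW B4 wcB.
Qed.

Lemma card_quadW0 : #|quadW 0| = 2.
Proof.
have := sum_quadW_deg (isT : 0 <= 4).
rewrite (eq_bigr (quadW_deg 2)) => [|y]; last by rewrite in_setC => /quadW_deg0_2.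
by rewrite sum_quadW_deg // card_quadW2; lia.
Qed.

Definition Wfree_pair K K' := [/\ K \in quadW 0, K' \in quadW 0 & K != K'].

Lemma Wfree_pair_sym K K' : Wfree_pair K K' -> Wfree_pair K' K.
Proof. by case=> K0 K'0 KK'; split; rewrite // eq_sym. Qed.

Lemma Wfree_pairE K K' : Wfree_pair K K' -> quadW 0 = [set K; K'].
Proof.
case=> K0 K'0 KK'; apply/esym/eqP; rewrite eqEcard card_quadW0 cards2 KK' andbT.
by apply/subsetP => P; rewrite in_set2 => /orP[] /eqP->.
Qed.

Lemma exists_Wfree_pair : exists K K', Wfree_pair K K'.
Proof.
have /cards2P [K [K' [KK' quadW0E]]] : #|quadW 0| == 2 by rewrite card_quadW0.
by exists K, K'; split; rewrite // quadW0E !inE eqxx ?orbT.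
Qed.

Lemma quadW_wc k B : B \in quadW k -> B \in quad /\ wc B = k.
Proof. by rewrite inE => /andP[-> /eqP]. Qed.

Lemma quadW0_notW P y : P \in quadW 0 -> y \in P -> y \notin W.
Proof.
move=> /quadW_wc[_ /eqP]; rewrite cards_eq0 => /eqP PW0 yP.
by apply/negP => yW; have := in_set0 y; rewrite -PW0 in_setI yP yW.
Qed.

Lemma quadW_share i j B C x y : B \in quadW i -> C \in quadW j -> x != y ->
  x \in B -> y \in B -> x \in C -> y \in C -> i = j.
Proof.
move=> /quadW_wc[/quadsP[DB _] <-] /quadW_wc[/quadsP[DC _] <-] xy xB yB xC yC.
by rewrite (block_uniq DB DC xy xB yB xC yC).
Qed.

Lemma quadW2_other B y : B \in quadW 2 -> y \in B -> y \notin W ->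
  exists u, [/\ u \in B, u \notin W & u != y].
Proof.
move=> /quadW_wc[/quadsP[_ B4] wcB] yB yNW.
have BNW2 : #|B :&: ~: W| = 2 by rewrite cardI_notW B4 wcB.
have [|u] := cards2_other BNW2 (_ : y \in B :&: ~: W); first by rewrite in_setI in_setC yB.
by rewrite in_setI in_setC => /andP[uB uNW] uy; exists u.
Qed.

Lemma quadW2_notW K K' B u : Wfree_pair K K' -> B \in quadW 2 -> u \in B ->
  u \notin W -> u \in K :|: K'.
Proof.
move=> KK' B2 uB uNW.
have : 0 < quadW_deg 2 u by apply/card_gt0P; exists B; rewrite inE B2 uB.
rewrite -quadW_deg0_2 // => /card_gt0P [P]; rewrite inE (Wfree_pairE KK') !inE.
by case/andP => /orP[] /eqP-> uP; rewrite uP ?orbT.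
Qed.

Lemma Wfree_disjoint K K' : Wfree_pair K K' -> [disjoint K & K'].
Proof.
move=> KK'; have [K0 K'0 _] := KK'.
apply/pred0P => y /=; apply/negP => /andP[yK yK'].
have yNW := quadW0_notW K0 yK.
have : 0 < quadW_deg 2 y.
  by rewrite -quadW_deg0_2 //; apply/card_gt0P; exists K; rewrite inE K0 yK.
case/card_gt0P => B; rewrite inE => /andP[B2 yB].
have [u [uB uNW uy]] := quadW2_other B2 yB yNW.
have := quadW2_notW KK' B2 uB uNW; rewrite in_setU => /orP[] uP.
  by have := quadW_share B2 K0 uy uB yB uP yK.
by have := quadW_share B2 K'0 uy uB yB uP yK'.
Qed.

Lemma Wfree_neq K K' k p : Wfree_pair K K' -> k \in K -> p \in K' -> k != p.
Proof.
by move=> KK' kK; apply: contraTneq => <-; rewrite (disjointFr (Wfree_disjoint KK') kK).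
Qed.

Lemma quadW_deg0_Wfree K K' y : Wfree_pair K K' -> y \in K -> quadW_deg 0 y = 1.
Proof.
move=> KK' yK; have yK'F := disjointFr (Wfree_disjoint KK') yK.
rewrite /quadW_deg (Wfree_pairE KK'); apply/eqP/cards1P; exists K; apply/setP => P.
rewrite in_set in_set2 in_set1; case: (P =P K) => [->|_] /=; first by rewrite yK.
by case: (P =P K') => [->|].
Qed.

Lemma quadW2_uniq K K' y B C : Wfree_pair K K' -> y \in K ->
  B \in quadW 2 -> C \in quadW 2 -> y \in B -> y \in C -> B = C.
Proof.
move=> KK' yK B2 C2 yB yC; have [K0 _ _] := KK'.
have := quadW_deg0_Wfree KK' yK; rewrite quadW_deg0_2 ?(quadW0_notW K0 yK) //.
move/eqP/cards1P => [E yE].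
have : B \in [set E] by rewrite -yE inE B2 yB.
have : C \in [set E] by rewrite -yE inE C2 yC.
by rewrite !in_set1 => /eqP-> /eqP->.
Qed.

Lemma Wfree_partner K K' k : Wfree_pair K K' -> k \in K ->
  exists2 p, p \in K' & block k p \in quadW 2.
Proof.
move=> KK' kK; have [K0 _ _] := KK'; have kNW := quadW0_notW K0 kK.
have : 0 < quadW_deg 2 k by rewrite -quadW_deg0_2 // (quadW_deg0_Wfree KK' kK).
case/card_gt0P => B; rewrite inE => /andP[B2 kB].
have [u [uB uNW uk]] := quadW2_other B2 kB kNW.
have uK' : u \in K'.
  have := quadW2_notW KK' B2 uB uNW; rewrite in_setU => /orP[uK|//].
  by have := quadW_share B2 K0 uk uB kB uK kK.
exists u => //; have ku : k != u by rewrite eq_sym.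
have [Dku kku uku] := blockP ku; have [/quadsP[DB _] _] := quadW_wc B2.
by rewrite (block_uniq Dku DB ku kku uku kB uB).
Qed.

Lemma Wfree_subnotW K K' : Wfree_pair K K' -> K :|: K' \subset ~: W.
Proof.
case=> K0 K'0 _; apply/subsetP => y; rewrite in_setC in_setU.
by case/orP => [/(quadW0_notW K0) | /(quadW0_notW K'0)].
Qed.

Definition Z K K' := ~: W :\: (K :|: K').

Lemma card_Wfree_setU K K' : Wfree_pair K K' -> #|K :|: K'| = 8.
Proof.
move=> KK'; have [/quadW_wc[/quadsP[_ K4] _] /quadW_wc[/quadsP[_ K'4] _] _] := KK'.
by have [_] := leq_card_setU K K'; rewrite Wfree_disjoint // K4 K'4 => /eqP.
Qed.

Lemma card_Z K K' : Wfree_pair K K' -> #|Z K K'| = 3.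
Proof.
move=> KK'; rewrite cardsD card_notW (setIidPr (Wfree_subnotW KK')).
by rewrite card_Wfree_setU.
Qed.

(* Counting the four vertices of K' seen from k: the triangle at k sees none
   of them, K sees none, and each of the four other quads at k at most one. *)
Lemma quad_at_Wfree_meet K K' k B : Wfree_pair K K' -> k \in K ->
  B \in quad_at k -> B != K -> #|B :&: K'| = 1.
Proof.
move=> KK' kK kB BK; have [K0 K'0 _] := KK'.
have [/quadsP[DK _] _] := quadW_wc K0; have [/quadsP[DK' K'4] _] := quadW_wc K'0.
have kNK' : k \notin K' by rewrite (disjointFr (Wfree_disjoint KK') kK).
have [T [triE _ TNW]] := tri_at_notW (quadW0_notW K0 kK).
have TK'0 : #|T :&: K'| = 0.
  apply/eqP; rewrite cards_eq0; apply/eqP/setP => y; rewrite in_set0 in_setI.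
  apply/negP => /andP[yT yK']; have : y \in T :&: ~: W.
    by rewrite in_setI yT (subsetP (Wfree_subnotW KK')) // in_setU yK' orbT.
  by rewrite TNW in_set1 => /eqP yk; rewrite -yk yK' in kNK'.
have := sum_cardI_blocks_at kNK'; rewrite triE big_set1 TK'0 add0n K'4 => sum4.
have K_at_k : K \in quad_at k by rewrite inE (quadW_wc K0).1 kK.
have sumG : \sum_(C in quad_at k) (C != K) = 4.
  rewrite -card_sep_sum (_ : [set C in quad_at k | C != K] = quad_at k :\ K).
    have := cardsD1 K (quad_at k).
    by rewrite K_at_k card_quad_at_notW ?(quadW0_notW K0 kK) // => -[].
  by apply/setP => C; rewrite in_setD1 in_set andbC.
suff -> : #|B :&: K'| = (B != K) by rewrite BK.
move: B kB {BK}; apply: (@leq_sum_eq _ _ (fun C => #|C :&: K'|)).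
  move=> C; rewrite inE => /andP[/quadsP[DC _] kC]; case: eqP => [->|/eqP CK].
    by rewrite (disjoint_setI0 (Wfree_disjoint KK')) cards0.
  by apply: card_blocksI_le1 => //; apply: contraNneq kNK' => <-.
by rewrite sumG sum4.
Qed.

Lemma card_tri_notW T : T \in tri -> #|T :&: ~: W| <= 1.
Proof. by move=> triT; rewrite cardI_notW (trianglesP triT).2; case: (wc_tri triT) => ->. Qed.

Lemma Wfree_meet_both K K' k B : Wfree_pair K K' -> k \in K ->
  B \in quad_at k -> B != K -> 1 < #|B :&: (K :|: K')|.
Proof.
move=> KK' kK kB BK; have /eqP/cards1P [p BK'E] := quad_at_Wfree_meet KK' kK kB BK.
have /setIP[pB pK'] : p \in B :&: K' by rewrite BK'E set11.
apply/card_gt1P; exists k, p; rewrite !in_setI !in_setU kK pK' pB orbT.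
by move: kB; rewrite inE => /andP[_ ->]; rewrite (Wfree_neq KK').
Qed.

Lemma wc_quad_Z K K' z B : Wfree_pair K K' -> z \in Z K K' -> B \in quad_at z -> wc B = 1.
Proof.
move=> KK' zZ; rewrite inE => /andP[quadB zB].
have [zNW zNKK'] : z \in ~: W /\ z \notin K :|: K' by move: zZ; rewrite in_setD => /andP[].
have wcB0 : wc B != 0.
  apply: contraNneq zNKK' => wcB0; have : B \in quadW 0 by rewrite inE quadB wcB0.
  by rewrite (Wfree_pairE KK') in_set2 in_setU => /orP[]/eqP<-; rewrite zB ?orbT.
have wcB2 : wc B != 2.
  apply: contraNneq zNKK' => wcB2; have B2 : B \in quadW 2 by rewrite inE quadB wcB2.
  by apply: quadW2_notW KK' B2 zB _; rewrite -in_setC.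
by move: (wc_quad_le2 quadB) wcB0 wcB2; case: (wc B) => [|[|[|n]]].
Qed.

(* The block through two vertices of Z has three vertices outside W, two of
   them in Z, so it cannot meet both K and K' (Wfree_meet_both). *)
Lemma block_Z K K' z1 z2 : Wfree_pair K K' -> z1 \in Z K K' -> z2 \in Z K K' ->
  z1 != z2 -> [/\ block z1 z2 \in quad, wc (block z1 z2) = 1 & block z1 z2 :&: ~: W = Z K K'].
Proof.
move=> KK' z1Z z2Z z12; have [DB z1B z2B] := blockP z12; set B := block z1 z2 in DB z1B z2B *.
have z1NKK' : z1 \notin K :|: K' by move: z1Z; rewrite in_setD => /andP[].
have BZ2 : 2 <= #|B :&: Z K K'|.
  have sub : [set z1; z2] \subset B :&: Z K K'.
    by apply/subsetP => y; rewrite in_set2 in_setI => /orP[]/eqP->; rewrite ?z1B ?z2B.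
  by have := subset_leq_card sub; rewrite cards2 z12.
have BNW_split : #|B :&: ~: W| = #|B :&: (K :|: K')| + #|B :&: Z K K'|.
  rewrite /Z setIDA -(cardsID (K :|: K') (B :&: ~: W)) -setIA.
  by rewrite (setIidPr (Wfree_subnotW KK')).
have quadB : B \in quad.
  case: (block_tri_or_quad D_size DB) => // /card_tri_notW.
  by rewrite BNW_split => /(leq_trans (leq_addl _ _))/(leq_trans BZ2).
have wcB1 : wc B = 1 by apply: wc_quad_Z KK' z1Z _; rewrite inE quadB z1B.
have BNW3 : #|B :&: ~: W| = 3 by rewrite cardI_notW (quadsP quadB).2 wcB1.
have BKK'_le1 : #|B :&: (K :|: K')| <= 1.
  by rewrite -(leq_add2r #|B :&: Z K K'|) -BNW_split BNW3 add1n ltnS.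
have BNP P P' : Wfree_pair P P' -> P :|: P' = K :|: K' -> forall v, v \in B -> v \notin P.
  move=> PP' PP'E v vB; apply/negP => vP.
  have BP : B != P by apply: contraNneq z1NKK' => BP; rewrite -PP'E in_setU -BP z1B.
  have Bv : B \in quad_at v by rewrite inE quadB vB.
  by have := Wfree_meet_both PP' vP Bv BP; rewrite PP'E ltnNge BKK'_le1.
split=> //; apply/eqP; rewrite eqEcard BNW3 card_Z // leqnn andbT.
apply/subsetP => v; rewrite in_setI => /andP[vB vNW].
rewrite in_setD vNW andbT in_setU negb_or (BNP K K') //.
by rewrite (BNP K' K (Wfree_pair_sym KK') (setUC K' K)).
Qed.

Lemma neq_W_notW x y : x \in W -> y \notin W -> x != y.
Proof. by move=> xW; apply: contraNneq => <-. Qed.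

(* The unique triangle at s goes through x0, so it cannot also contain A. *)
Lemma block_at_W_quad A x0 R s : A \in W -> x0 \in W -> A != x0 -> R \in quad ->
  A \in R -> x0 \in R -> s \notin W -> s \notin R -> block x0 s \in tri ->
  block A s \in quad_at A /\ block A s != R.
Proof.
move=> AW x0W Ax0 quadR AR x0R sNW sNR tri_x0s.
have [DAs AAs sAs] := blockP (neq_W_notW AW sNW).
have [_ x0x0s sx0s] := blockP (neq_W_notW x0W sNW).
split; last by apply: contraNneq sNR => <-.
rewrite inE AAs andbT; case: (block_tri_or_quad D_size DAs) => // triAs.
have [T [triE _ _]] := tri_at_notW sNW.
have : block A s \in tri_at s by rewrite inE triAs sAs.
have : block x0 s \in tri_at s by rewrite inE tri_x0s sx0s.
rewrite triE !in_set1 => /eqP x0sT /eqP AsT.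
have x0As : x0 \in block A s by rewrite AsT -x0sT.
have [[DR R4] [_ As3]] := (quadsP quadR, trianglesP triAs).
by move: As3; rewrite (block_uniq DAs DR Ax0 AAs x0As AR x0R) R4.
Qed.

Section Cross.
Variables (K K' R : {set 'I_18}) (A k3 k4 p3 p4 : 'I_18).
Hypothesis KK' : Wfree_pair K K'.
Hypotheses (AW : A \in W) (RW2 : R \in quadW 2) (AR : A \in R).
Hypotheses (k3K : k3 \in K) (k4K : k4 \in K) (k34 : k3 != k4).
Hypotheses (p3K' : p3 \in K') (p4K' : p4 \in K') (p34 : p3 != p4).
Hypotheses (C3 : block k3 p3 \in quadW 2) (C4 : block k4 p4 \in quadW 2).
Hypotheses (Ak3 : block A k3 \in quad_at A) (Ak3R : block A k3 != R).
Hypotheses (Ak4 : block A k4 \in quad_at A) (Ak4R : block A k4 != R).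
Hypotheses (Ap3 : block A p3 \in quad_at A) (Ap3R : block A p3 != R).
Hypotheses (Ap4 : block A p4 \in quad_at A) (Ap4R : block A p4 != R).

Let K0 : K \in quadW 0. Proof. by case: KK'. Qed.
Let K'0 : K' \in quadW 0. Proof. by case: KK'. Qed.

Let notW_K y : y \in K -> y \notin W. Proof. exact: quadW0_notW K0. Qed.
Let notW_K' y : y \in K' -> y \notin W. Proof. exact: quadW0_notW K'0. Qed.

Let blockA y : y \notin W -> [/\ block A y \in D, A \in block A y & y \in block A y].
Proof. by move=> yNW; apply: blockP (neq_W_notW AW yNW). Qed.

Lemma block_A_k3_k4 : block A k3 != block A k4.
Proof.
have [[DX3 AX3 k3X3] [_ _ k4X4]] := (blockA (notW_K k3K), blockA (notW_K k4K)).
apply/eqP => X34; have k4X3 : k4 \in block A k3 by rewrite X34.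
have [/quadsP[DK _] _] := quadW_wc K0.
have X3K := block_uniq DX3 DK k34 k3X3 k4X3 k3K k4K.
have AK : A \in K by rewrite -X3K.
by move: (notW_K AK); rewrite AW.
Qed.

Lemma quad_at_A_E : quad_at A = R |: [set block A k3; block A k4].
Proof.
have sub : R |: [set block A k3; block A k4] \subset quad_at A.
  apply/subsetP => X; rewrite in_setU1 in_set2 => /or3P[]/eqP-> //.
  by rewrite inE (quadW_wc RW2).1 AR.
apply/esym/eqP; rewrite eqEcard sub card_quad_at_W // cardsU1 cards2 block_A_k3_k4.
by rewrite in_set2 negb_or ![R == _]eq_sym Ak3R Ak4R.
Qed.

Lemma quad_at_AP X : X \in quad_at A -> [\/ X = R, X = block A k3 | X = block A k4].
Proof. by rewrite quad_at_A_E in_setU1 in_set2 => /or3P[]/eqP; constructor. Qed.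

(* Otherwise the three quads at A would be R, block k3 p3 and block k4 p4,
   all with two vertices in W, giving excess A = 3. *)
Lemma p3_notin_block_A_k3 : p3 \notin block A k3.
Proof.
apply/negP => p3X3.
have [[DX3 _ k3X3] [DX4 _ k4X4]] := (blockA (notW_K k3K), blockA (notW_K k4K)).
have [DC3 k3C3 p3C3] := blockP (Wfree_neq KK' k3K p3K').
have [DC4 k4C4 p4C4] := blockP (Wfree_neq KK' k4K p4K').
have [_ _ p4P4] := blockA (notW_K' p4K').
have X3E := block_uniq DX3 DC3 (Wfree_neq KK' k3K p3K') k3X3 p3X3 k3C3 p3C3.
have X4E : block A k4 = block k4 p4.
  case: (quad_at_AP Ap4) => P4E; first by move: Ap4R; rewrite P4E eqxx.
    have p4C3 : p4 \in block k3 p3 by rewrite -X3E -P4E.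
    by have := quadW_share C3 K'0 p34 p3C3 p4C3 p3K' p4K'.
  by apply: (block_uniq DX4 DC4 (Wfree_neq KK' k4K p4K')) => //; rewrite -P4E.
have /eqP := excess_W AW; suff -> : excess A = 3 by [].
rewrite /excess (@sum_nat_const_in _ _ _ 1) ?card_quad_at_W // => X /quad_at_AP.
by case=> ->; rewrite ?X3E ?X4E ?(quadW_wc RW2).2 ?(quadW_wc C3).2 ?(quadW_wc C4).2.
Qed.

Lemma A_in_block_k4_p3 : A \in block k4 p3.
Proof.
have [[DX4 AX4 k4X4] [_ _ p3P3]] := (blockA (notW_K k4K), blockA (notW_K' p3K')).
have [Dk4p3 k4B p3B] := blockP (Wfree_neq KK' k4K p3K').
case: (quad_at_AP Ap3) => P3E; first by move: Ap3R; rewrite P3E eqxx.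
  by move: p3_notin_block_A_k3; rewrite -P3E p3P3.
have p3X4 : p3 \in block A k4 by rewrite -P3E.
by rewrite -(block_uniq DX4 Dk4p3 (Wfree_neq KK' k4K p3K') k4X4 p3X4 k4B p3B).
Qed.

End Cross.

Section CentralQuad.
Variables (K K' Q : {set 'I_18}) (x0 : 'I_18).
Hypotheses (KK' : Wfree_pair K K') (quadQ : Q \in quad).
Hypotheses (QW : Q :&: W = [set x0]) (QNW : Q :&: ~: W = Z K K').

Let K0 : K \in quadW 0. Proof. by case: KK'. Qed.
Let K'0 : K' \in quadW 0. Proof. by case: KK'. Qed.

Lemma x0_W : x0 \in W.
Proof. by have /setIP[] : x0 \in Q :&: W by rewrite QW set11. Qed.

Lemma x0_Q : x0 \in Q.
Proof. by have /setIP[] : x0 \in Q :&: W by rewrite QW set11. Qed.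

Lemma Q_KK' v : v \in Q -> v \notin K :|: K'.
Proof.
move=> vQ; apply/negP => vKK'; have vNW := subsetP (Wfree_subnotW KK') v vKK'.
have : v \in Q :&: ~: W by rewrite in_setI vQ.
by rewrite QNW in_setD vKK'.
Qed.

Lemma x0_KK' : x0 \notin K :|: K'.
Proof. by apply: contraL x0_W => /(subsetP (Wfree_subnotW KK')); rewrite in_setC. Qed.

Lemma cardI_Wfree_x0 B : B \in D -> x0 \in B -> #|B :&: K| <= 1 /\ #|B :&: K'| <= 1.
Proof.
have [[/quadsP[DK _] _] [/quadsP[DK' _] _]] := (quadW_wc K0, quadW_wc K'0).
move: x0_KK'; rewrite in_setU negb_or => /andP[x0K x0K'] DB x0B.
split; apply: card_blocksI_le1 => //.
  by apply: contraNneq x0K => <-.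
by apply: contraNneq x0K' => <-.
Qed.

(* Counting the eight vertices of K :|: K' seen from x0: each of the four
   triangles at x0 sees at most one of them and Q sees none. *)
Lemma quad_at_x0_KK' R : R \in quad_at x0 -> R != Q -> #|R :&: (K :|: K')| = 2.
Proof.
move=> Rx0 RQ; have := sum_cardI_blocks_at x0_KK'; rewrite card_Wfree_setU // => sum8.
have tri_le4 : \sum_(T in tri_at x0) #|T :&: (K :|: K')| <= 4.
  rewrite -[X in _ <= X](alpha_W x0_W) /alpha_x -sum1_card; apply: leq_sum => T.
  rewrite inE => /andP[triT _].
  exact: leq_trans (subset_leq_card (setIS T (Wfree_subnotW KK'))) (card_tri_notW triT).
have Q_at_x0 : Q \in quad_at x0 by rewrite inE quadQ x0_Q.
have sumG : \sum_(B in quad_at x0) (B != Q) * 2 = 4.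
  rewrite -big_distrl /= -card_sep_sum (_ : [set B in quad_at x0 | B != Q] = quad_at x0 :\ Q).
    by have := cardsD1 Q (quad_at x0); rewrite Q_at_x0 card_quad_at_W ?x0_W // add1n => -[<-].
  by apply/setP => B; rewrite in_setD1 in_set andbC.
suff /(_ R Rx0) : {in quad_at x0, forall B, #|B :&: (K :|: K')| = (B != Q) * 2}.
  by rewrite RQ.
apply: leq_sum_eq => [B|]; last by rewrite sumG; move: sum8 tri_le4; lia.
rewrite inE => /andP[/quadsP[DB _] x0B]; case: eqP => [->|_].
  rewrite leqn0 cards_eq0; apply/eqP/setP => v; rewrite in_set0 in_setI.
  by apply/negP => /andP[/Q_KK'/negP].
have [BK BK'] := cardI_Wfree_x0 DB x0B.
by rewrite setIUr; apply: leq_trans (leq_card_setU _ _).1 (leq_add BK BK').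
Qed.

Lemma quad_at_x0 R : R \in quad_at x0 -> R != Q -> R \in quadW 2 /\ #|R :&: K| = 1.
Proof.
move=> Rx0 RQ; have RKK' := quad_at_x0_KK' Rx0 RQ.
move: Rx0; rewrite inE => /andP[quadR x0R]; have [DR R4] := quadsP quadR.
have [RK RK'] := cardI_Wfree_x0 DR x0R.
have RNW : R :&: ~: W = R :&: (K :|: K').
  apply/eqP; rewrite eqEsubset (setIS R (Wfree_subnotW KK')) andbT.
  apply/subsetP => v; rewrite !in_setI => /andP[vR vNW]; rewrite vR /=.
  apply: contraT => vNKK'; have : v \in Q :&: ~: W by rewrite QNW in_setD vNKK'.
  rewrite in_setI => /andP[vQ _]; have [DQ _] := quadsP quadQ.
  have x0v : x0 != v by apply: neq_W_notW x0_W _; rewrite -in_setC.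
  by move: RQ; rewrite (block_uniq DR DQ x0v x0R vR x0_Q vQ) eqxx.
have wcR : wc R = 2.
  by have := wc_quad_le2 quadR; move: (cardI_notW R); rewrite RNW RKK' R4; lia.
split; first by rewrite inE quadR wcR.
by move: RKK'; rewrite setIUr; have := (leq_card_setU (R :&: K) (R :&: K')).1; lia.
Qed.

Lemma block_x0_tri s : s \in K :|: K' ->
  (forall R, R \in quad_at x0 -> R != Q -> s \notin R) -> block x0 s \in tri.
Proof.
move=> sKK' s_far; have sNW : s \notin W by rewrite -in_setC (subsetP (Wfree_subnotW KK')).
have [Dx0s x0x0s sx0s] := blockP (neq_W_notW x0_W sNW).
case: (block_tri_or_quad D_size Dx0s) => // quad_x0s.
have x0s_at_x0 : block x0 s \in quad_at x0 by rewrite inE quad_x0s x0x0s.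
have [x0sQ|x0sQ] := eqVneq (block x0 s) Q.
  have sQ : s \in Q by rewrite -x0sQ.
  by move: (Q_KK' sQ); rewrite sKK'.
by move: (s_far _ x0s_at_x0 x0sQ); rewrite sx0s.
Qed.

Lemma quads_at_x0 R1 R2 R : quad_at x0 :\ Q = [set R1; R2] -> R \in [set R1; R2] ->
  [/\ R \in quadW 2, #|R :&: K| = 1, R \in D & x0 \in R].
Proof.
move=> x0_quads; rewrite -x0_quads in_setD1 => /andP[RQ Rx0].
have [RW2 RK] := quad_at_x0 Rx0 RQ; have [/quadsP[DR _] _] := quadW_wc RW2.
by move: Rx0; rewrite inE => /andP[_ x0R].
Qed.

Section Configuration.
Variables (R1 R2 : {set 'I_18}) (k3 k4 p3 p4 : 'I_18).
Hypotheses (R12 : R1 != R2) (x0_quads : quad_at x0 :\ Q = [set R1; R2]).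
Hypotheses (k3K : k3 \in K) (k4K : k4 \in K) (k34 : k3 != k4).
Hypotheses (p3K' : p3 \in K') (p4K' : p4 \in K') (p34 : p3 != p4).
Hypotheses (C3 : block k3 p3 \in quadW 2) (C4 : block k4 p4 \in quadW 2).
Hypothesis far : forall s, s \in [set k3; k4; p3; p4] -> s \notin R1 :|: R2.

Lemma cross_at_x0 R A : R \in [set R1; R2] -> A \in R -> A \in W -> A != x0 ->
  A \in block k4 p3 /\ A \in block k3 p4.
Proof.
move=> R_R12 AR AW Ax0; have [RW2 _ _ x0R] := quads_at_x0 x0_quads R_R12.
have [quadR _] := quadW_wc RW2.
have blockA s : s \in [set k3; k4; p3; p4] -> block A s \in quad_at A /\ block A s != R.
  move=> sS; have sKK' : s \in K :|: K'.
    move: sS; rewrite !in_setU !in_set1 -!orbA.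
    by case/or4P => /eqP->; rewrite ?k3K ?k4K ?p3K' ?p4K' ?orbT.
  have s_far R' : R' \in quad_at x0 -> R' != Q -> s \notin R'.
    move=> R'x0 R'Q; have : R' \in [set R1; R2] by rewrite -x0_quads in_setD1 R'Q.
    by move: (far sS); rewrite in_setU negb_or in_set2 => /andP[sR1 sR2] /orP[]/eqP->.
  apply: block_at_W_quad AW x0_W Ax0 quadR AR x0R _ _ (block_x0_tri sKK' s_far).
    by rewrite -in_setC (subsetP (Wfree_subnotW KK')).
  apply: contra (far sS) => sR; move: R_R12; rewrite in_set2 in_setU.
  by case/orP => /eqP<-; rewrite sR ?orbT.
have [k3S k4S p3S p4S] : [/\ k3 \in [set k3; k4; p3; p4], k4 \in [set k3; k4; p3; p4],
    p3 \in [set k3; k4; p3; p4] & p4 \in [set k3; k4; p3; p4]].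
  by rewrite !inE !eqxx ?orbT.
have [[Ak3 Ak3R] [Ak4 Ak4R]] := (blockA _ k3S, blockA _ k4S).
have [[Ap3 Ap3R] [Ap4 Ap4R]] := (blockA _ p3S, blockA _ p4S).
have [k43 p43] : k4 != k3 /\ p4 != p3 by rewrite eq_sym [p4 == _]eq_sym.
by split; [apply: (A_in_block_k4_p3 KK' AW RW2 AR k3K k4K k34 p3K' p4K' p34 C3 C4)
          |apply: (A_in_block_k4_p3 KK' AW RW2 AR k4K k3K k43 p4K' p3K' p43 C4 C3)].
Qed.

Lemma configuration_absurd : False.
Proof.
have W_other R : R \in [set R1; R2] -> exists A, [/\ A \in R, A \in W & A != x0].
  move=> /(quads_at_x0 x0_quads)[/quadW_wc[_ wcR] _ _ x0R].
  have [|A] := cards2_other wcR (_ : x0 \in R :&: W); first by rewrite in_setI x0R x0_W.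
  by rewrite in_setI => /andP[AR AW] Ax0; exists A.
have [R1in R2in] : R1 \in [set R1; R2] /\ R2 \in [set R1; R2] by rewrite !in_set2 !eqxx ?orbT.
have [A1 [A1R1 A1W A1x0]] := W_other R1 R1in.
have [A2 [A2R2 A2W A2x0]] := W_other R2 R2in.
have A12 : A1 != A2.
  apply: contraNneq R12 => A12.
  have [[_ _ DR1 x0R1] [_ _ DR2 x0R2]] :=
    (quads_at_x0 x0_quads R1in, quads_at_x0 x0_quads R2in).
  by apply/eqP; apply: (block_uniq DR1 DR2 A1x0 A1R1 x0R1 _ x0R2); rewrite A12.
have [A1B A1B'] := cross_at_x0 R1in A1R1 A1W A1x0.
have [A2B A2B'] := cross_at_x0 R2in A2R2 A2W A2x0.
have [Dk4p3 k4B p3B] := blockP (Wfree_neq KK' k4K p3K').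
have [Dk3p4 k3B' _] := blockP (Wfree_neq KK' k3K p4K').
have k3B : k3 \in block k4 p3 by rewrite (block_uniq Dk4p3 Dk3p4 A12 A1B A2B A1B' A2B').
have [/quadsP[DK _] _] := quadW_wc K0.
have A1K : A1 \in K by rewrite -(block_uniq Dk4p3 DK k34 k3B k4B k3K k4K).
by move: (quadW0_notW K0 A1K); rewrite A1W.
Qed.

End Configuration.

Lemma card_K_outside R1 R2 : R1 != R2 -> quad_at x0 :\ Q = [set R1; R2] ->
  #|K :\: (R1 :|: R2)| = 2.
Proof.
move=> R12 x0_quads; have [R1in R2in] : R1 \in [set R1; R2] /\ R2 \in [set R1; R2].
  by rewrite !in_set2 !eqxx ?orbT.
have [[_ /eqP/cards1P[k1 R1K] DR1 x0R1] [_ /eqP/cards1P[k2 R2K] DR2 x0R2]] :=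
  (quads_at_x0 x0_quads R1in, quads_at_x0 x0_quads R2in).
have [k1R1 k1K] : k1 \in R1 /\ k1 \in K by apply/setIP; rewrite R1K set11.
have [k2R2 k2K] : k2 \in R2 /\ k2 \in K by apply/setIP; rewrite R2K set11.
have k12 : k1 != k2.
  apply: contraNneq R12 => k12; have x0k1 : x0 != k1.
    by apply: neq_W_notW x0_W _; apply: quadW0_notW K0 k1K.
  by apply/eqP; apply: (block_uniq DR1 DR2 x0k1 x0R1 k1R1 x0R2); rewrite k12.
rewrite cardsD setIUr (setIC K) (setIC K) R1K R2K cards2 k12.
by have [/quadW_wc[/quadsP[_ ->]]] := KK'.
Qed.

Lemma partner_outside R1 R2 k p : quad_at x0 :\ Q = [set R1; R2] ->
  k \in K -> k \notin R1 :|: R2 -> p \in K' -> block k p \in quadW 2 -> p \notin R1 :|: R2.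
Proof.
move=> x0_quads kK kNR pK' C2; have [Dkp kC pC] := blockP (Wfree_neq KK' kK pK').
apply: contra kNR => pR12; have [R R_in pR] : exists2 R, R \in [set R1; R2] & p \in R.
  move: pR12; rewrite in_setU => /orP[]; [exists R1 | exists R2] => //.
    by rewrite set21.
  by rewrite set22.
have [RW2 _ _ _] := quads_at_x0 x0_quads R_in.
move: R_in; rewrite (quadW2_uniq (Wfree_pair_sym KK') pK' RW2 C2 pR pC) in_set2 in_setU.
by case/orP => /eqP<-; rewrite kC ?orbT.
Qed.

Lemma central_quad_absurd : False.
Proof.
have Q_at_x0 : Q \in quad_at x0 by rewrite inE quadQ x0_Q.
have /cards2P [R1 [R2 [R12 x0_quads]]] : #|quad_at x0 :\ Q| == 2.
  by have := cardsD1 Q (quad_at x0); rewrite Q_at_x0 card_quad_at_W ?x0_W // add1n => -[<-].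
have /cards2P [k3 [k4 [k34 K_out]]] : #|K :\: (R1 :|: R2)| == 2.
  by rewrite card_K_outside.
have out s : s \in [set k3; k4] -> s \in K /\ s \notin R1 :|: R2.
  by rewrite -K_out in_setD => /andP[].
have [[k3K k3N] [k4K k4N]] := (out k3 (set21 _ _), out k4 (set22 _ _)).
have [[p3 p3K' C3] [p4 p4K' C4]] := (Wfree_partner KK' k3K, Wfree_partner KK' k4K).
have p34 : p3 != p4.
  apply/eqP => p34; move: C4; rewrite -p34 => C4.
  have [[_ k3C p3C3] [_ k4C p3C4]] :=
    (blockP (Wfree_neq KK' k3K p3K'), blockP (Wfree_neq KK' k4K p3K')).
  have k4C3 : k4 \in block k3 p3.
    by rewrite (quadW2_uniq (Wfree_pair_sym KK') p3K' C3 C4 p3C3 p3C4).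
  by have := quadW_share C3 K0 k34 k3C k4C3 k3K k4K.
apply: (configuration_absurd R12 x0_quads k3K k4K k34 p3K' p4K' p34 C3 C4).
move=> s; rewrite !in_setU !in_set1 -!orbA => /or4P[]/eqP->; rewrite -?in_setU //.
  exact: partner_outside x0_quads k3K k3N p3K' C3.
exact: partner_outside x0_quads k4K k4N p4K' C4.
Qed.

End CentralQuad.

Lemma profile_absurd : False.
Proof.
have [K [K' KK']] := exists_Wfree_pair.
have /card_gt1P [z1 [z2 [z1Z z2Z z12]]] : 1 < #|Z K K'| by rewrite card_Z.
have [quadQ wcQ QNW] := block_Z KK' z1Z z2Z z12.
have /cards1P [x0 QW] : #|block z1 z2 :&: W| == 1 by rewrite wcQ.
exact: central_quad_absurd KK' quadQ QW QNW.
Qed.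

End Profile.

Theorem mainTheorem17 (D : {set {set 'I_18}}) :
  is_K34_decomp D -> alpha D = 13 ->
  (t_count D 0, t_count D 1, t_count D 2, t_count D 3) <> (0, 0, 11, 2).
Proof.
move=> [D_size D_edge] alphaD [t0 t1 t2 t3].
exact: profile_absurd D_size D_edge alphaD t0 t1 t2 t3.
Qed.
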